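(* Let $N: M \to S^2$ be a non--trivial harmonic map. Then every $\mu$--Darboux transform of $N$ is given by a simple factor dressing, and vice versa. More precisely, if we denote by $d_\lambda$ the associated family of flat connections of $N$ and put $M_\mu =\varphi\mathbb{C}$ for a $d_\mu$--parallel section $\varphi\in\Gamma(\tilde M\times\mathbb{H})$, $\mu\in\mathbb{C}_*$, then the simple factor dressing $\hat N$ of $N$ with respect to $M_\mu$ is the $\mu$--Darboux transform of $N$ with respect to $\varphi$, that is \[ \hat N = T^{-1} N T \] with $T = \frac 12(N\varphi(a-1)\varphi^{-1} + \varphi b\varphi^{-1})$ and $a=\frac{\mu+\mu^{-1}}2, b = i\frac{\mu^{-1}-\mu}2$.
   Context: $M$ is a Riemann surface with complex structure $J_M$ and universal cover $\tilde M$; $*\omega(X)=\omega(J_MX)$ for 1--forms. $\mathbb{R}^4=\mathbb{H}$, $\mathbb{R}^3=\operatorname{Im}\mathbb{H}$, $S^2=\{n\in\operatorname{Im}\mathbb{H}\mid n^2=-1\}$. A map $N:M\to S^2$ is harmonic if $d*dN = N\,dN\wedge *dN$. Let $J$ be left multiplication by $N$ on the trivial bundle $M\times\mathbb{H}$, with Hopf field $A=\frac{J(dJ)+*dJ}{4}$. Identify $\mathbb{H}=\mathbb{C}\oplus j\mathbb{C}$ with $\mathbb{C}^2$ via the complex structure $I$ = right multiplication by $i$; complex numbers $z$ act as endomorphisms $\phi\mapsto\phi z$. Set $A^{(1,0)}=\frac12(A-I*A)$, $A^{(0,1)}=\frac12(A+I*A)$, and the associated family $d_\lambda = d + (\lambda-1)A^{(1,0)}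 + (\lambda^{-1}-1)A^{(0,1)}$, $\lambda\in\mathbb{C}_*$, which is flat for all $\lambda$ since $N$ is harmonic; $N$ is non--trivial if $d_\lambda\neq d$ (achievable for non-constant $N$ by replacing $N$ by $-N$). Simple factor dressing: for $\mu\in\mathbb{C}_*\setminus S^1$ and a $d_\mu$--parallel complex line subbundle $M_\mu$ of $\tilde M\times\mathbb{C}^2$, let $\pi_\mu,\pi_\mu^\perp$ be the projections onto $M_\mu$ and $M_\mu^\perp$ (with $M_\mu^\perp = M_\mu j$) for the splitting $\mathbb{C}^2=M_\mu\oplus M_\mu^\perp$, and $r_\lambda=\pi_\mu\circ\gamma_\lambda+\pi_\mu^\perp$ with $\gamma_\lambda=\frac{1-\bar\mu^{-1}}{1-\mu}\frac{\lambda-\mu}{\lambda-\bar\mu^{-1}}$. Then $\hat d_\lambda=r_\lambda\circ d_\lambda\circ r_\lambda^{-1}$ is the associated family of a harmonic map $\hat N:\tilde M\to S^2$ (the simple factor dressing), whose complex structure $\hat J$ is the quaternionic extension of $\hat J|_{\hat E}=I$ with $\hat E=r_\infty E$, $E$ the $+i$ eigenspace of $J$. For $\mu\in S^1$, $r_\lambda=\mathrm{id}$ and $\hat N=N$. $\mu$--Darboux transform: for $\mu\in\mathbb{C}_*$, $\mu\neq1$, and a $d_\mu$--parallel section $\varphi$, the map $T$ defined in the claim is nowhere vanishing and $\hat N=T^{-1}NT$ is harmonic; this is the $\mu$--Darboux transform of $N$ with respect to $\varphi$ (for $\mu\in S^1$ it equals $N$). *)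

From Stdlib Require Import Reals.
From Coquelicot Require Import Coquelicot.
Open Scope R_scope.

(* Quaternions H = R^4 with basis 1, i, j, k.                          *)
Record quat := Q { q0 : R; q1 : R; q2 : R; q3 : R }.

Definition qzero : quat := Q 0 0 0 0.
Definition qone  : quat := Q 1 0 0 0.
Definition qi    : quat := Q 0 1 0 0.
Definition qj    : quat := Q 0 0 1 0.

Definition qadd (p q : quat) : quat :=
  Q (q0 p + q0 q) (q1 p + q1 q) (q2 p + q2 q) (q3 p + q3 q).
Definition qopp (p : quat) : quat := Q (- q0 p) (- q1 p) (- q2 p) (- q3 p).
Definition qsub (p q : quat) : quat := qadd p (qopp q).
Definition qscal (r : R) (p : quat) : quat :=
  Q (r * q0 p) (r * q1 p) (r * q2 p) (r * q3 p).
Definition qmul (p q : quat) : quat :=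
  Q (q0 p * q0 q - q1 p * q1 q - q2 p * q2 q - q3 p * q3 q)
    (q0 p * q1 q + q1 p * q0 q + q2 p * q3 q - q3 p * q2 q)
    (q0 p * q2 q - q1 p * q3 q + q2 p * q0 q + q3 p * q1 q)
    (q0 p * q3 q + q1 p * q2 q - q2 p * q1 q + q3 p * q0 q).
Definition qnorm2 (p : quat) : R := q0 p ^ 2 + q1 p ^ 2 + q2 p ^ 2 + q3 p ^ 2.
Definition qconj (p : quat) : quat := Q (q0 p) (- q1 p) (- q2 p) (- q3 p).
(* quaternion inverse (only meaningful for p <> 0) *)
Definition qinv (p : quat) : quat := qscal (/ qnorm2 p) (qconj p).

Definition is_complex (z : quat) : Prop := q2 z = 0 /\ q3 z = 0.
Definition cconj (z : quat) : quat := qconj z.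

Definition in_S2 (n : quat) : Prop := q0 n = 0 /\ qmul n n = qopp qone.

(* Splitting H = C (+) jC of a quaternion q = z + j w :
   cpart q = z (in C), jpart q = j w (in jC). *)
Definition cpart (q : quat) : quat := Q (q0 q) (q1 q) 0 0.
Definition jpart (q : quat) : quat := Q 0 0 (q2 q) (q3 q).

(* Calculus on a coordinate chart U of the (universal cover of the)    *)
(* Riemann surface: U is an open subset of R^2 = C, z = x + i y, with  *)
(* complex structure J_M d/dx = d/dy, J_M d/dy = - d/dx.               *)
Definition pdx (f : R * R -> R) (p : R * R) : R :=
  Derive (fun t => f (t, snd p)) (fst p).
Definition pdy (f : R * R -> R) (p : R * R) : R :=
  Derive (fun t => f (fst p, t)) (snd p).

Fixpoint Ck (k : nat) (U : R * R -> Prop) (f : R * R -> R) : Prop :=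
  match k with
  | O => forall p, U p -> continuous f p
  | S k' =>
      (forall p, U p ->
         continuous f p /\
         ex_derive (fun t => f (t, snd p)) (fst p) /\
         ex_derive (fun t => f (fst p, t)) (snd p)) /\
      Ck k' U (pdx f) /\ Ck k' U (pdy f)
  end.

Definition smooth_on (U : R * R -> Prop) (f : R * R -> R) : Prop :=
  forall k, Ck k U f.

Definition qsmooth_on (U : R * R -> Prop) (F : R * R -> quat) : Prop :=
  smooth_on U (fun p => q0 (F p)) /\ smooth_on U (fun p => q1 (F p)) /\
  smooth_on U (fun p => q2 (F p)) /\ smooth_on U (fun p => q3 (F p)).

Definition qdx (F : R * R -> quat) (p : R * R) : quat :=
  Q (pdx (fun p => q0 (F p)) p) (pdx (fun p => q1 (F p)) p)
    (pdx (fun p => q2 (F p)) p) (pdx (fun p => q3 (F p)) p).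
Definition qdy (F : R * R -> quat) (p : R * R) : quat :=
  Q (pdy (fun p => q0 (F p)) p) (pdy (fun p => q1 (F p)) p)
    (pdy (fun p => q2 (F p)) p) (pdy (fun p => q3 (F p)) p).

(* H-valued 1-forms, given by their values on d/dx and d/dy *)
Record form1 := F1 { fx : R * R -> quat; fy : R * R -> quat }.

Definition dform (F : R * R -> quat) : form1 := F1 (qdx F) (qdy F).
(* Hodge star: ( *w)(X) = w(J_M X) *)
Definition star (w : form1) : form1 := F1 (fy w) (fun p => qopp (fx w p)).
(* exterior derivative of a 1-form, evaluated on (d/dx, d/dy) *)
Definition d1 (w : form1) (p : R * R) : quat := qsub (qdx (fy w) p) (qdy (fx w) p).
(* wedge product of H-valued 1-forms, evaluated on (d/dx, d/dy) *)
Definition wedge (a b : form1) (p : R * R) : quat :=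
  qsub (qmul (fx a p) (fy b p)) (qmul (fy a p) (fx b p)).

Definition harmonic_S2 (U : R * R -> Prop) (N : R * R -> quat) : Prop :=
  qsmooth_on U N /\ (forall p, U p -> in_S2 (N p)) /\
  (forall p, U p ->
     d1 (star (dform N)) p = qmul (N p) (wedge (dform N) (star (dform N)) p)).

(* Hopf field A = (J dJ + *dJ)/4, J = left multiplication by N.
   Values are quaternions acting by left multiplication. *)
Definition hopfA (N : R * R -> quat) : form1 :=
  F1 (fun p => qscal (/ 4) (qadd (qmul (N p) (fx (dform N) p)) (fx (star (dform N)) p)))
     (fun p => qscal (/ 4) (qadd (qmul (N p) (fy (dform N) p)) (fy (star (dform N)) p))).

(* A^(1,0) = 1/2 (A - I *A), A^(0,1) = 1/2 (A + I *A), I = right mult. by i,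
   applied to a vector v in H, on d/dx (x) and d/dy (y). *)
Definition A10x N p v :=
  qscal (/ 2) (qsub (qmul (fx (hopfA N) p) v) (qmul (qmul (fx (star (hopfA N)) p) v) qi)).
Definition A10y N p v :=
  qscal (/ 2) (qsub (qmul (fy (hopfA N) p) v) (qmul (qmul (fy (star (hopfA N)) p) v) qi)).
Definition A01x N p v :=
  qscal (/ 2) (qadd (qmul (fx (hopfA N) p) v) (qmul (qmul (fx (star (hopfA N)) p) v) qi)).
Definition A01y N p v :=
  qscal (/ 2) (qadd (qmul (fy (hopfA N) p) v) (qmul (qmul (fy (star (hopfA N)) p) v) qi)).

(* Associated family d_lam = d + (lam-1) A^(1,0) + (lam^-1 - 1) A^(0,1);
   complex numbers act by right multiplication. *)
Definition dlam (N : R * R -> quat) (lam : quat) (psi : R * R -> quat) : form1 :=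
  F1 (fun p => qadd (qdx psi p)
        (qadd (qmul (A10x N p (psi p)) (qsub lam qone))
              (qmul (A01x N p (psi p)) (qsub (qinv lam) qone))))
     (fun p => qadd (qdy psi p)
        (qadd (qmul (A10y N p (psi p)) (qsub lam qone))
              (qmul (A01y N p (psi p)) (qsub (qinv lam) qone)))).

Definition parallel_on (U : R * R -> Prop) (nabla : form1) : Prop :=
  forall p, U p -> fx nabla p = qzero /\ fy nabla p = qzero.

Definition nontrivial_on (U : R * R -> Prop) (N : R * R -> quat) : Prop :=
  exists lam psi, is_complex lam /\ lam <> qzero /\ qsmooth_on U psi /\
    ~ (forall p, U p -> fx (dlam N lam psi) p = fx (dform psi) p /\
                        fy (dlam N lam psi) p = fy (dform psi) p).

(* projections for H = M_mu (+) M_mu^perp, M_mu = phi C, M_mu^perp = M_mu j *)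
Definition pi_mu (phi v : quat) : quat := qmul phi (cpart (qmul (qinv phi) v)).
Definition pi_mu_perp (phi v : quat) : quat := qmul phi (jpart (qmul (qinv phi) v)).
Definition gamma_lam (mu lam : quat) : quat :=
  qmul (qmul (qsub qone (qinv (cconj mu))) (qinv (qsub qone mu)))
       (qmul (qsub lam mu) (qinv (qsub lam (qinv (cconj mu))))).
(* gamma_infty = lim_{lam -> infty} gamma_lam = (1 - conj(mu)^-1)/(1 - mu) *)
Definition gamma_inf (mu : quat) : quat :=
  qmul (qsub qone (qinv (cconj mu))) (qinv (qsub qone mu)).
Definition r_lam (mu lam phi v : quat) : quat :=
  qadd (qmul (pi_mu phi v) (gamma_lam mu lam)) (pi_mu_perp phi v).
Definition r_inf (mu phi v : quat) : quat :=
  qadd (qmul (pi_mu phi v) (gamma_inf mu)) (pi_mu_perp phi v).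

(* Nhat is the simple factor dressing of N w.r.t. M_mu = phi C:
   for mu in S^1, Nhat = N; otherwise Nhat : U -> S^2 and its complex
   structure Jhat (left mult. by Nhat) is I on Ehat = r_infty E,
   E = { v | N v = v i } the +i eigenspace of J. *)
Definition simple_factor_dressing (U : R * R -> Prop) (N phi : R * R -> quat)
    (mu : quat) (Nhat : R * R -> quat) : Prop :=
  forall p, U p ->
    (qnorm2 mu = 1 -> Nhat p = N p) /\
    (qnorm2 mu <> 1 ->
       in_S2 (Nhat p) /\
       forall e, qmul (N p) e = qmul e qi ->
         qmul (Nhat p) (r_inf mu (phi p) e) = qmul (r_inf mu (phi p) e) qi).

Definition dt_a (mu : quat) : quat := qscal (/ 2) (qadd mu (qinv mu)).
Definition dt_b (mu : quat) : quat := qmul qi (qscal (/ 2) (qsub (qinv mu) mu)).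
Definition darbouxT (N phi : R * R -> quat) (mu : quat) (p : R * R) : quat :=
  qscal (/ 2)
    (qadd (qmul (qmul (qmul (N p) (phi p)) (qsub (dt_a mu) qone)) (qinv (phi p)))
          (qmul (qmul (phi p) (dt_b mu)) (qinv (phi p)))).

Definition darboux_transform (N phi : R * R -> quat) (mu : quat) (p : R * R) : quat :=
  qmul (qmul (qinv (darbouxT N phi mu p)) (N p)) (darbouxT N phi mu p).

From Stdlib Require Import Reals Lra.
From Coquelicot Require Import Coquelicot.
Open Scope R_scope.

(* After the gauge [n = phi^-1 N phi] the factor is [T = phi (n s + b) phi^-1 / 2] with the
   complex numbers [s = a - 1] and [b], and [r_infty e = phi (y_C gamma + y_jC)] for
   [y = phi^-1 e].  Since [gamma = gamma_infty] satisfies [(s + i b) gamma = conj s + i conj b],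
   [T r_infty] maps the [+i] eigenline [E] of [N] into itself; hence [T^-1 N T] acts as [I] on
   [r_infty E], and a complex structure in [S^2] is determined by one such non-zero vector.
   On the unit circle [s] and [b] are real, so [T] commutes with [N]. *)

Ltac quat_unfold :=
  unfold qsub, qmul, qadd, qopp, qscal, qconj, qone, qi, qj, qzero, cpart, jpart in *;
  simpl in *.
(* Componentwise expansion; its cost grows exponentially with the nesting of [qmul], so
   nested products are abstracted before calling it. *)
Ltac quat_expand := repeat match goal with q : quat |- _ => destruct q as [?a ?b ?c ?d] end;
  unfold qsub, qmul, qadd, qopp, qscal, qconj, qone, qi, qj, qzero, cpart, jpart;
  cbn [q0 q1 q2 q3]; f_equal.
Ltac quat_ring := quat_expand; ring.
Ltac quat_field := quat_expand; field.

Lemma qmul_assoc p q r : qmul p (qmul q r) = qmul (qmul p q) r. Proof. quat_ring. Qed.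
Lemma qmul_addl p q r : qmul (qadd p q) r = qadd (qmul p r) (qmul q r). Proof. quat_ring. Qed.
Lemma qmul_addr p q r : qmul r (qadd p q) = qadd (qmul r p) (qmul r q). Proof. quat_ring. Qed.
Lemma qmul_subl p q r : qmul (qsub p q) r = qsub (qmul p r) (qmul q r). Proof. quat_ring. Qed.
Lemma qmul_subr p q r : qmul r (qsub p q) = qsub (qmul r p) (qmul r q). Proof. quat_ring. Qed.
Lemma qmul_scall a p q : qmul (qscal a p) q = qscal a (qmul p q). Proof. quat_ring. Qed.
Lemma qmul_scalr a p q : qmul p (qscal a q) = qscal a (qmul p q). Proof. quat_ring. Qed.
Lemma qmul_1l p : qmul qone p = p. Proof. quat_ring. Qed.
Lemma qmul_1r p : qmul p qone = p. Proof. quat_ring. Qed.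
Lemma qmul_0r p : qmul p qzero = qzero. Proof. quat_ring. Qed.
Lemma qmul_oppl p q : qmul (qopp p) q = qopp (qmul p q). Proof. quat_ring. Qed.
Lemma qmul_oppr p q : qmul p (qopp q) = qopp (qmul p q). Proof. quat_ring. Qed.
Lemma qsub_eq0 p q : qsub p q = qzero -> p = q.
Proof. destruct p, q; quat_unfold; intro E; injection E; intros; f_equal; lra. Qed.
Lemma qscal_eq0 r p : r <> 0 -> qscal r p = qzero -> p = qzero.
Proof.
  destruct p; quat_unfold; intros Hr E; injection E; intros.
  f_equal; eapply Rmult_eq_reg_l; try eassumption; lra.
Qed.

Lemma qnorm2_mul p q : qnorm2 (qmul p q) = qnorm2 p * qnorm2 q.
Proof. destruct p, q; unfold qnorm2, qmul; simpl; ring. Qed.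

Lemma qnorm2_eq0 p : qnorm2 p = 0 -> p = qzero.
Proof.
  destruct p as [a b c d]; unfold qnorm2, qzero; simpl; intro E.
  assert (a = 0 /\ b = 0 /\ c = 0 /\ d = 0) as (-> & -> & -> & ->) by (repeat split; nra).
  reflexivity.
Qed.

Lemma qnorm2_neq0 p : p <> qzero -> qnorm2 p <> 0.
Proof. intros Hp E. exact (Hp (qnorm2_eq0 p E)). Qed.

Lemma qmul_eq0 p q : qmul p q = qzero -> p = qzero \/ q = qzero.
Proof.
  intro E. assert (N : qnorm2 p * qnorm2 q = 0)
    by (rewrite <- qnorm2_mul, E; unfold qnorm2, qzero; simpl; ring).
  destruct (Rmult_integral _ _ N); [left | right]; now apply qnorm2_eq0.
Qed.

Lemma qinv_l p : p <> qzero -> qmul (qinv p) p = qone.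
Proof.
  intro Hp. generalize (qnorm2_neq0 p Hp).
  destruct p; unfold qinv, qnorm2; quat_unfold; intro H; f_equal; field; contradict H; lra.
Qed.

Lemma qinv_r p : p <> qzero -> qmul p (qinv p) = qone.
Proof.
  intro Hp. generalize (qnorm2_neq0 p Hp).
  destruct p; unfold qinv, qnorm2; quat_unfold; intro H; f_equal; field; contradict H; lra.
Qed.

Lemma qinv_neq0 p : p <> qzero -> qinv p <> qzero.
Proof.
  intros Hp E. generalize (qinv_r p Hp). rewrite E, qmul_0r.
  unfold qone, qzero; intro F; injection F; lra.
Qed.

Lemma qmulK p x : p <> qzero -> qmul (qmul x p) (qinv p) = x.
Proof. intro Hp. now rewrite <- qmul_assoc, qinv_r, qmul_1r. Qed.
Lemma qdivK p x : p <> qzero -> qmul (qmul x (qinv p)) p = x.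
Proof. intro Hp. now rewrite <- qmul_assoc, qinv_l, qmul_1r. Qed.
Lemma qmulKr p x : p <> qzero -> qmul (qinv p) (qmul p x) = x.
Proof. intro Hp. now rewrite qmul_assoc, qinv_l, qmul_1l. Qed.
Lemma qmulVKr p x : p <> qzero -> qmul p (qmul (qinv p) x) = x.
Proof. intro Hp. now rewrite qmul_assoc, qinv_r, qmul_1l. Qed.

Lemma qmul_neq0 p q : p <> qzero -> q <> qzero -> qmul p q <> qzero.
Proof. intros Hp Hq E. destruct (qmul_eq0 p q E); contradiction. Qed.

Lemma quat_eq_dec (p q : quat) : {p = q} + {p <> q}.
Proof. decide equality; apply Req_EM_T. Qed.

Lemma qinv_qzero : qinv qzero = qzero.
Proof. unfold qinv, qnorm2; quat_ring. Qed.

Lemma qinv_qconj p : qinv (qconj p) = qconj (qinv p).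
Proof.
  assert (Hn : qnorm2 (qconj p) = qnorm2 p) by (destruct p; unfold qnorm2; simpl; ring).
  unfold qinv. rewrite Hn. quat_ring.
Qed.

Lemma qinv_eq1 p : qinv p = qone -> p = qone.
Proof.
  intro E. destruct (quat_eq_dec p qzero) as [->|Hp].
  - rewrite qinv_qzero in E. unfold qzero, qone in E; injection E; lra.
  - now rewrite <- (qmul_1r p), <- E, qinv_r.
Qed.

Lemma qi_neq0 : qi <> qzero.
Proof. unfold qi, qzero; intro E; injection E; lra. Qed.

Lemma qadd_cpart_jpart q : qadd (cpart q) (jpart q) = q.
Proof. quat_ring. Qed.

Lemma complex_comm a b : is_complex a -> is_complex b -> qmul a b = qmul b a.
Proof.
  destruct a, b; unfold is_complex; simpl; intros [-> ->] [-> ->]; quat_ring.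
Qed.

Lemma is_complex_qi : is_complex qi.
Proof. split; reflexivity. Qed.

Lemma is_complex_qone : is_complex qone.
Proof. split; reflexivity. Qed.

Lemma is_complex_qadd a b : is_complex a -> is_complex b -> is_complex (qadd a b).
Proof. intros [Ha2 Ha3] [Hb2 Hb3]; split; simpl; rewrite ?Ha2, ?Ha3, ?Hb2, ?Hb3; ring. Qed.

Lemma is_complex_qsub a b : is_complex a -> is_complex b -> is_complex (qsub a b).
Proof. intros [Ha2 Ha3] [Hb2 Hb3]; split; simpl; rewrite ?Ha2, ?Ha3, ?Hb2, ?Hb3; ring. Qed.

Lemma is_complex_qmul a b : is_complex a -> is_complex b -> is_complex (qmul a b).
Proof. intros [Ha2 Ha3] [Hb2 Hb3]; split; simpl; rewrite ?Ha2, ?Ha3, ?Hb2, ?Hb3; ring. Qed.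

Lemma is_complex_qscal r a : is_complex a -> is_complex (qscal r a).
Proof. intros [Ha2 Ha3]; split; simpl; rewrite ?Ha2, ?Ha3; ring. Qed.

Lemma is_complex_qconj a : is_complex a -> is_complex (qconj a).
Proof. intros [Ha2 Ha3]; split; simpl; rewrite ?Ha2, ?Ha3; ring. Qed.

Lemma is_complex_qinv a : is_complex a -> is_complex (qinv a).
Proof. intro Ha. now apply is_complex_qscal, is_complex_qconj. Qed.

Lemma qi_qconj_qi z : is_complex z -> qmul qi (qconj (qmul qi z)) = qconj z.
Proof. destruct z; intros [H2 H3]; simpl in *; subst; quat_ring. Qed.

#[local] Hint Resolve is_complex_qi is_complex_qone is_complex_qadd is_complex_qsub is_complex_qmul
  is_complex_qscal is_complex_qconj is_complex_qinv : complex.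

Definition gauge (f x : quat) : quat := qmul (qmul (qinv f) x) f.

Lemma gauge_mul f x y : f <> qzero ->
  gauge f (qmul x y) = qmul (gauge f x) (gauge f y).
Proof. intro Hf. unfold gauge. now rewrite !qmul_assoc, qmulK. Qed.

Lemma gauge_comm f x : f <> qzero -> qmul x f = qmul f x -> gauge f x = x.
Proof. intros Hf E. unfold gauge. now rewrite <- qmul_assoc, E, qmulKr. Qed.

Lemma in_S2_gauge f x : f <> qzero -> in_S2 x -> in_S2 (gauge f x).
Proof.
  intros Hf [Hx0 Hxx]. split.
  - destruct x, f; simpl in Hx0; subst; unfold gauge, qinv, qnorm2; quat_unfold; ring.
  - rewrite <- gauge_mul, Hxx by assumption. unfold gauge.
    now rewrite qmul_oppr, qmul_1r, qmul_oppl, qinv_l by assumption.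
Qed.

Definition i_eigen (n v : quat) : Prop := qmul n v = qmul v qi.

Lemma i_eigen_gauge f x v : f <> qzero ->
  i_eigen (gauge f x) v <-> i_eigen x (qmul f v).
Proof.
  intro Hf. unfold i_eigen, gauge. rewrite <- !qmul_assoc. split; intro E.
  - now rewrite <- E, qmulVKr.
  - now rewrite E, qmulKr.
Qed.

Lemma i_eigen_sub n v w : i_eigen n v -> i_eigen n w -> i_eigen n (qsub v w).
Proof. unfold i_eigen; intros Hv Hw. now rewrite qmul_subr, qmul_subl, Hv, Hw. Qed.

Lemma i_eigen_scal n r v : i_eigen n v -> i_eigen n (qscal r v).
Proof. unfold i_eigen; intro Hv. now rewrite qmul_scalr, qmul_scall, Hv. Qed.

Lemma i_eigen_mul_complex n v c : is_complex c -> i_eigen n v -> i_eigen n (qmul v c).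
Proof.
  unfold i_eigen; intros Hc Hv.
  now rewrite qmul_assoc, Hv, <- !qmul_assoc, (complex_comm qi c is_complex_qi Hc).
Qed.

(* [v - n v i] is twice the component of [v] in the [+i] eigenspace of [n]. *)
Lemma i_eigen_proj n v : qmul n n = qopp qone ->
  i_eigen n (qsub v (qmul (qmul n v) qi)).
Proof.
  intro Hnn. assert (Hii : qmul qi qi = qopp qone) by quat_ring.
  unfold i_eigen. rewrite qmul_subr, qmul_subl, !qmul_assoc, Hnn, <- !qmul_assoc, Hii.
  rewrite !qmul_oppl, !qmul_oppr, !qmul_1l, !qmul_1r. quat_ring.
Qed.

Lemma i_eigen_unique a b r : r <> qzero -> i_eigen a r -> i_eigen b r -> a = b.
Proof.
  unfold i_eigen; intros Hr Ha Hb.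
  now rewrite <- (qmulK r a), <- (qmulK r b), Ha, Hb.
Qed.

Lemma i_eigen_exists n : in_S2 n -> exists e, e <> qzero /\ i_eigen n e.
Proof.
  intros [Hn0 Hnn].
  destruct (quat_eq_dec (qsub qone (qmul (qmul n qone) qi)) qzero) as [E|E].
  - exists qj. split; [unfold qj, qzero; intro F; injection F; lra|].
    assert (Hn : n = qopp qi).
    { apply qsub_eq0 in E. rewrite qmul_1r in E.
      replace n with (qopp (qmul (qmul n qi) qi)) by quat_ring.
      rewrite <- E. quat_ring. }
    subst n. unfold i_eigen. quat_ring.
  - exists (qsub qone (qmul (qmul n qone) qi)). split; [exact E|].
    now apply i_eigen_proj.
Qed.

Definition dress (g y : quat) : quat := qadd (qmul (cpart y) g) (jpart y).

Lemma r_inf_gauge mu f e :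
  r_inf mu f e = qmul f (dress (gamma_inf mu) (qmul (qinv f) e)).
Proof. unfold r_inf, pi_mu, pi_mu_perp, dress. now rewrite qmul_addr, qmul_assoc. Qed.

Lemma dress_eq0 g y : is_complex g -> g <> qzero -> dress g y = qzero -> y = qzero.
Proof.
  intros Hg Hg0 E.
  assert (Hc : qmul (cpart y) g = qzero /\ jpart y = qzero).
  { destruct y, g; destruct Hg as [Hg2 Hg3]; simpl in Hg2, Hg3; subst.
    unfold dress in E; quat_unfold; injection E; intros.
    split; f_equal; lra. }
  destruct Hc as [Hc Hj]. destruct (qmul_eq0 _ _ Hc) as [Hy|]; [|contradiction].
  rewrite <- (qadd_cpart_jpart y), Hy, Hj. quat_ring.
Qed.

Lemma cpart_twist s b g y : is_complex s -> is_complex b -> is_complex g ->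
  qadd (qmul s (qmul (cpart y) g)) (qmul (qmul b (qmul (cpart y) g)) qi)
  = qmul (cpart y) (qmul (qadd s (qmul qi b)) g).
Proof.
  destruct s, b, g, y; intros [Hs2 Hs3] [Hb2 Hb3] [Hg2 Hg3]; simpl in *; subst; quat_ring.
Qed.

Lemma jpart_twist s b y : is_complex s -> is_complex b ->
  qadd (qmul s (jpart y)) (qmul (qmul b (jpart y)) qi)
  = qmul (jpart y) (qadd (qconj s) (qmul qi (qconj b))).
Proof.
  destruct s, b, y; intros [Hs2 Hs3] [Hb2 Hb3]; simpl in *; subst; quat_ring.
Qed.

Lemma dress_twist s b g y : is_complex s -> is_complex b -> is_complex g ->
  qadd (qmul s (dress g y)) (qmul (qmul b (dress g y)) qi)
  = qadd (qmul (cpart y) (qmul (qadd s (qmul qi b)) g))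
         (qmul (jpart y) (qadd (qconj s) (qmul qi (qconj b)))).
Proof.
  intros Hs Hb Hg. rewrite <- cpart_twist, <- jpart_twist by assumption.
  unfold dress. generalize (qmul (cpart y) g) (jpart y). intros; quat_ring.
Qed.

Lemma i_eigen_dress n s b g y :
  in_S2 n -> is_complex s -> is_complex b -> is_complex g ->
  qmul (qadd s (qmul qi b)) g = qadd (qconj s) (qmul qi (qconj b)) ->
  i_eigen n y -> i_eigen n (qmul (qadd (qmul n s) b) (dress g y)).
Proof.
  intros [_ Hnn] Hs Hb Hg Hrel Hy.
  (* [u = s w + b w i] lies in the eigenline, and [(n s + b) w = (s w - n s w i - u) i]. *)
  assert (Hu : qadd (qmul s (dress g y)) (qmul (qmul b (dress g y)) qi)
               = qmul y (qadd (qconj s) (qmul qi (qconj b)))).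
  { now rewrite dress_twist, Hrel, <- qmul_addl, qadd_cpart_jpart. }
  assert (Hsplit : forall w, qmul (qadd (qmul n s) b) w =
      qmul (qsub (qsub (qmul s w) (qmul (qmul n (qmul s w)) qi))
                 (qadd (qmul s w) (qmul (qmul b w) qi))) qi).
  { intro w. rewrite qmul_addl, <- qmul_assoc.
    generalize (qmul n (qmul s w)). generalize (qmul s w) (qmul b w). clear. intros; quat_ring. }
  rewrite Hsplit, Hu.
  apply i_eigen_mul_complex; [exact is_complex_qi|].
  apply i_eigen_sub; [now apply i_eigen_proj|].
  apply i_eigen_mul_complex; auto with complex.
Qed.

Lemma is_complex_dt mu : is_complex mu ->
  is_complex (qsub (dt_a mu) qone) /\ is_complex (dt_b mu).
Proof. intro Hmu. unfold dt_a, dt_b. split; auto with complex. Qed.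

Lemma is_complex_gamma_inf mu : is_complex mu -> is_complex (gamma_inf mu).
Proof. intro Hmu. unfold gamma_inf, cconj. auto with complex. Qed.

Lemma dt_add_i mu : qadd (qsub (dt_a mu) qone) (qmul qi (dt_b mu)) = qsub mu qone.
Proof. unfold dt_a, dt_b. generalize (qinv mu). intro. quat_field. Qed.

Lemma dt_add_i_conj mu : is_complex mu ->
  qadd (qconj (qsub (dt_a mu) qone)) (qmul qi (qconj (dt_b mu)))
  = qsub (qconj (qinv mu)) qone.
Proof.
  intro Hmu. unfold dt_b. rewrite qi_qconj_qi by auto with complex.
  unfold dt_a. generalize (qinv mu). intro; quat_field.
Qed.

Lemma gamma_inf_relation mu : is_complex mu -> mu <> qone ->
  qmul (qadd (qsub (dt_a mu) qone) (qmul qi (dt_b mu))) (gamma_inf mu)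
  = qadd (qconj (qsub (dt_a mu) qone)) (qmul qi (qconj (dt_b mu))).
Proof.
  intros Hmu Hmu1. rewrite dt_add_i, dt_add_i_conj by assumption.
  unfold gamma_inf, cconj. rewrite qinv_qconj.
  assert (H1 : qsub qone mu <> qzero) by (intro E; apply Hmu1, eq_sym, qsub_eq0, E).
  assert (Hc : qmul (qsub qone mu) (qsub qone (qconj (qinv mu)))
             = qmul (qsub qone (qconj (qinv mu))) (qsub qone mu))
    by (apply complex_comm; auto with complex).
  replace (qsub mu qone) with (qopp (qsub qone mu)) by quat_ring.
  rewrite qmul_oppl, qmul_assoc, Hc, qmulK by assumption. quat_ring.
Qed.

Lemma gamma_inf_neq0 mu : mu <> qone -> gamma_inf mu <> qzero.
Proof.
  intro Hmu1. unfold gamma_inf, cconj. apply qmul_neq0.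
  - intro E. apply qsub_eq0, eq_sym, qinv_eq1 in E.
    apply Hmu1. destruct mu; unfold qconj, qone in *; injection E; intros; f_equal; lra.
  - apply qinv_neq0. intro E. apply Hmu1, eq_sym, qsub_eq0, E.
Qed.

(* Either [s = b = 0], or [n s + b = 0] forces [n] to be complex, i.e. [n = i] or [n = -i]. *)
Lemma S2_mul_complex_add_eq0 n s b : in_S2 n -> is_complex s -> is_complex b ->
  qadd (qmul n s) b = qzero ->
  qadd (qmul qi s) b = qzero \/ qadd (qmul (qopp qi) s) b = qzero.
Proof.
  destruct n as [n0 n1 n2 n3], s as [s0 s1 s2 s3], b as [b0 b1 b2 b3].
  intros [Hn0 Hnn] [Hs2 Hs3] [Hb2 Hb3]; simpl in *; subst.
  quat_unfold. intro E; injection E; clear E; intros E3 E2 E1 E0.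
  injection Hnn; intros _ _ _ Hn.
  destruct (Req_dec (s0 * s0 + s1 * s1) 0) as [Hs|Hs].
  - assert (s0 = 0 /\ s1 = 0) as [-> ->] by (split; nra).
    left; f_equal; lra.
  - assert (Hn23 : (n2 * n2 + n3 * n3) * (s0 * s0 + s1 * s1) = 0) by nra.
    apply Rmult_integral in Hn23 as [Hn23|]; [|contradiction].
    assert (n2 = 0 /\ n3 = 0) as [-> ->] by (split; nra).
    assert (Hn1 : (n1 - 1) * (n1 + 1) = 0) by nra.
    assert (n1 = 1 \/ n1 = -1) as [-> | ->]
      by (destruct (Rmult_integral _ _ Hn1); [left | right]; lra).
    + left; f_equal; lra.
    + right; f_equal; lra.
Qed.

Definition darboux_coeff (n mu : quat) : quat :=
  qadd (qmul n (qsub (dt_a mu) qone)) (dt_b mu).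

Lemma darboux_coeff_neq0 n mu : in_S2 n -> is_complex mu -> mu <> qone ->
  darboux_coeff n mu <> qzero.
Proof.
  intros Hn Hmu Hmu1 E. destruct (is_complex_dt mu Hmu) as [Hs Hb].
  assert (Hi : qmul qi (qsub (qinv mu) qone) = qzero \/ qmul qi (qsub qone mu) = qzero).
  { destruct (S2_mul_complex_add_eq0 _ _ _ Hn Hs Hb E) as [E'|E']; [left|right];
      rewrite <- E'; unfold dt_a, dt_b; generalize (qinv mu); intro; quat_field. }
  apply Hmu1. destruct Hi as [Hi|Hi]; apply qmul_eq0 in Hi as [Hi|Hi];
    try (now destruct qi_neq0); apply qsub_eq0 in Hi; auto using qinv_eq1.
Qed.

(* [darbouxT] at a single point: [darbouxT N phi mu p] is convertible to
   [darboux_factor (N p) (phi p) mu]. *)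
Definition darboux_factor (n f mu : quat) : quat :=
  qscal (/ 2)
    (qadd (qmul (qmul (qmul n f) (qsub (dt_a mu) qone)) (qinv f))
          (qmul (qmul f (dt_b mu)) (qinv f))).

Lemma darboux_factor_gauge n f mu : f <> qzero ->
  darboux_factor n f mu = qscal (/ 2) (qmul (qmul f (darboux_coeff (gauge f n) mu)) (qinv f)).
Proof.
  intro Hf. unfold darboux_factor, darboux_coeff. f_equal.
  rewrite qmul_addr, qmul_addl, qmul_assoc. unfold gauge. now rewrite qmul_assoc, qmulVKr.
Qed.

Lemma darboux_factor_neq0 n f mu : in_S2 n -> f <> qzero -> is_complex mu -> mu <> qone ->
  darboux_factor n f mu <> qzero.
Proof.
  intros Hn Hf Hmu Hmu1. rewrite darboux_factor_gauge by assumption.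
  intro E. apply qscal_eq0 in E; [|lra]. revert E.
  apply qmul_neq0; [apply qmul_neq0|]; auto using qinv_neq0.
  apply darboux_coeff_neq0; auto using in_S2_gauge.
Qed.

Lemma i_eigen_darboux_factor n f mu e : in_S2 n -> f <> qzero -> is_complex mu -> mu <> qone ->
  i_eigen n e -> i_eigen n (qmul (darboux_factor n f mu) (r_inf mu f e)).
Proof.
  intros Hn Hf Hmu Hmu1 He.
  rewrite darboux_factor_gauge, r_inf_gauge, qmul_scall by assumption.
  apply i_eigen_scal. rewrite qmul_assoc, qdivK, <- qmul_assoc by assumption.
  apply i_eigen_gauge; [assumption|].
  destruct (is_complex_dt mu Hmu) as [Hs Hb].
  apply i_eigen_dress; auto using in_S2_gauge, is_complex_gamma_inf, gamma_inf_relation.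
  apply i_eigen_gauge; [assumption|]. now rewrite qmulVKr.
Qed.

Lemma r_inf_neq0 mu f e : f <> qzero -> is_complex mu -> mu <> qone -> e <> qzero ->
  r_inf mu f e <> qzero.
Proof.
  intros Hf Hmu Hmu1 He. rewrite r_inf_gauge. apply qmul_neq0; [assumption|].
  intro E. apply dress_eq0 in E; auto using is_complex_gamma_inf, gamma_inf_neq0.
  revert E. apply qmul_neq0; auto using qinv_neq0.
Qed.

Definition is_real (r : quat) : Prop := q1 r = 0 /\ q2 r = 0 /\ q3 r = 0.

Lemma real_comm r x : is_real r -> qmul x r = qmul r x.
Proof. destruct r, x; intros (H1 & H2 & H3); simpl in *; subst; quat_ring. Qed.

(* On the unit circle [mu^-1 = conj mu], so [a] and [b] are real. *)
Lemma is_real_dt mu : is_complex mu -> qnorm2 mu = 1 ->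
  is_real (qsub (dt_a mu) qone) /\ is_real (dt_b mu).
Proof.
  intros Hmu Hk. unfold dt_a, dt_b, qinv. rewrite Hk, Rinv_1.
  destruct mu; destruct Hmu; simpl in *; subst.
  split; repeat split; quat_unfold; ring.
Qed.

Lemma darboux_factor_comm n f mu : f <> qzero -> is_complex mu -> qnorm2 mu = 1 ->
  qmul n (darboux_factor n f mu) = qmul (darboux_factor n f mu) n.
Proof.
  intros Hf Hmu Hk. destruct (is_real_dt mu Hmu Hk) as [Hs Hb].
  unfold darboux_factor.
  rewrite <- (qmul_assoc n), (real_comm _ f Hs), (real_comm _ f Hb), qmul_assoc, !qmulK
    by assumption.
  revert Hs Hb. generalize (qsub (dt_a mu) qone) (dt_b mu).
  intros s b (Hs1 & Hs2 & Hs3) (Hb1 & Hb2 & Hb3).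
  destruct s, b; simpl in *; subst; quat_ring.
Qed.

Theorem theorem6p1
  (U : R * R -> Prop) (N phi : R * R -> quat) (mu : quat) :
  open U ->
  harmonic_S2 U N ->
  nontrivial_on U N ->
  is_complex mu -> mu <> qzero -> mu <> qone ->
  qsmooth_on U phi ->
  (forall p, U p -> phi p <> qzero) ->
  parallel_on U (dlam N mu phi) ->
  (forall p, U p -> darbouxT N phi mu p <> qzero) /\
  (exists Nhat, simple_factor_dressing U N phi mu Nhat) /\
  (forall Nhat, simple_factor_dressing U N phi mu Nhat ->
     forall p, U p -> Nhat p = darboux_transform N phi mu p).
Proof.
  intros _ [_ [HS2 _]] _ Hmu _ Hmu1 _ Hphi _.
  assert (HT : forall p, U p -> darbouxT N phi mu p <> qzero)
    by (intros p Up; apply darboux_factor_neq0; auto).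
  assert (Hunit : qnorm2 mu = 1 -> forall p, U p -> darboux_transform N phi mu p = N p).
  { intros Hk p Up. apply gauge_comm; auto.
    exact (darboux_factor_comm (N p) (phi p) mu (Hphi p Up) Hmu Hk). }
  assert (Hline : forall p, U p -> forall e, i_eigen (N p) e ->
            i_eigen (darboux_transform N phi mu p) (r_inf mu (phi p) e)).
  { intros p Up e He. apply i_eigen_gauge; auto. apply i_eigen_darboux_factor; auto. }
  split; [exact HT | split].
  - exists (darboux_transform N phi mu). intros p Up. split; [intro Hk; now apply Hunit|].
    intros _. split; [apply in_S2_gauge; auto | now apply Hline].
  - intros Nhat Hs p Up. destruct (Hs p Up) as [Hon Hoff].
    destruct (Req_dec (qnorm2 mu) 1) as [Hk|Hk].
    + rewrite Hunit by assumption. now apply Hon.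
    + destruct (Hoff Hk) as [_ Hhat].
      destruct (i_eigen_exists _ (HS2 p Up)) as [e [He0 He]].
      apply (i_eigen_unique _ _ (r_inf mu (phi p) e)).
      * apply r_inf_neq0; auto.
      * now apply Hhat.
      * now apply Hline.
Qed.
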